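(* Let $r\in\mathbb{N}$ and let $\bm{{\mathcal H}_x},\bm{{\mathcal H}_y}$ be finite sets of vectors of $(r+1)$-vertex graphs (each graph endowed with an ordered pair of distinguished vertices), with $t_x:=|\bm{{\mathcal H}_x}|$ and $t_y:=|\bm{{\mathcal H}_y}|$. Let $\beta_x,\beta_y,\epsilon>0$. Suppose $G$ is a sufficiently large $n$-vertex graph, $x,y\in V(G)$, and there is $U\subseteq V(G)$ with $|U|\geq\epsilon n$ such that for every $z\in U$, $x$ and $z$ are $(\bm{{\mathcal H}_x};\beta_x)$-reachable and $z$ and $y$ are $(\bm{{\mathcal H}_y};\beta_y)$-reachable. Then $x$ and $y$ are $(\bm{{\mathcal H}_x}+\bm{{\mathcal H}_y};\beta)$-reachable, where $\beta:=\frac{\epsilon\beta_x\beta_y}{2t_xt_y}$.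
   Context: Let $\bm{H}=(H^1,\dots,H^t)$ be a vector of $(r+1)$-vertex graphs, each $H^i$ with an ordered pair of distinct distinguished vertices $(w_1^i,w_2^i)$. An $\bm{H}$-path is obtained by taking vertex-disjoint copies of $H^1,\dots,H^t$ and identifying $w_2^i$ with $w_1^{i+1}$ for $i\in[t-1]$; its endpoints are $w_1^1$ and $w_2^t$. Two vertices $x,y$ of an $n$-vertex graph $G$ are $(\bm{H};\beta)$-reachable if there are at least $\beta n^{tr-1}$ distinct labelled embeddings of the $\bm{H}$-path into $G$ mapping the endpoints to $\{x,y\}$. For a set $\bm{{\mathcal H}}$ of such vectors, $x,y$ are $(\bm{{\mathcal H}};\beta)$-reachable if they are $(\bm{H};\beta)$-reachable for some $\bm{H}\in\bm{{\mathcal H}}$. For two such sets, $\bm{{\mathcal H}}+\tilde{\bm{{\mathcal H}}}:=\bm{{\mathcal H}}\cup\tilde{\bm{{\mathcal H}}}\cup\{(H^1,\dots,H^t,\tilde H^1,\dots,\tilde H^{\tilde t}):(H^1,\dots,H^t)\in\bm{{\mathcal H}},(\tilde H^1,\dots,\tilde H^{\tilde t})\in\tilde{\bm{{\mathcal H}}}\}$. *)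

From HB Require Import structures.
From mathcomp Require Import all_boot all_order all_algebra.
From mathcomp Require Import reals.
Set Implicit Arguments. Unset Strict Implicit. Unset Printing Implicit Defensive.
Import Order.TTheory GRing.Theory Num.Theory.
Local Open Scope ring_scope.

(* Adjacency is a finite function so that the type
   has decidable equality (needed to speak of finite sets = uniq seqs). *)
Definition pgraph (r : nat) : Type :=
  ({ffun 'I_r.+1 * 'I_r.+1 -> bool} * ('I_r.+1 * 'I_r.+1))%type.

Definition pg_adj r (H : pgraph r) (u v : 'I_r.+1) : bool := H.1 (u, v).
Definition pg_w1 r (H : pgraph r) : 'I_r.+1 := H.2.1.
Definition pg_w2 r (H : pgraph r) : 'I_r.+1 := H.2.2.

Definition pg_ok r (H : pgraph r) : bool :=
  [&& [forall u, forall v, pg_adj H u v == pg_adj H v u],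
      [forall u, ~~ pg_adj H u u] & pg_w1 H != pg_w2 H].

Definition pg_default r : pgraph r := ([ffun _ => false], (ord0, ord0)).

(* The H-path for Hs = (H^1,...,H^t) is the quotient of the disjoint union of
   the copies (i, u), i < t, u in V(H^i), by identifying (i, w2^i) with
   (i+1, w1^{i+1}).  [pident] is this identification relation. *)
Definition pident r (Hs : seq (pgraph r)) (i : 'I_(size Hs)) (u : 'I_r.+1)
    (j : 'I_(size Hs)) (v : 'I_r.+1) : bool :=
  let Hi := nth (pg_default r) Hs i in
  let Hj := nth (pg_default r) Hs j in
  [|| (i == j) && (u == v),
      [&& (val j == (val i).+1)%N, u == pg_w2 Hi & v == pg_w1 Hj]
    | [&& (val i == (val j).+1)%N, v == pg_w2 Hj & u == pg_w1 Hi]].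

(* A labelled embedding of the H-path into G (given as compatible maps on the
   copies) sending the endpoints w1^1 to x and w2^t to y: edges of every copy
   are mapped to edges of G, and two copy-vertices have the same image iff
   they are identified in the path (i.e. the induced map on the path is
   well defined and injective). *)
Definition path_emb r n (G : rel 'I_n) (Hs : seq (pgraph r)) (x y : 'I_n)
    (F : {ffun 'I_(size Hs) -> {ffun 'I_r.+1 -> 'I_n}}) : bool :=
  [&& [forall i : 'I_(size Hs), forall u : 'I_r.+1, forall v : 'I_r.+1,
         pg_adj (nth (pg_default r) Hs i) u v ==> G (F i u) (F i v)],
      [forall i : 'I_(size Hs), forall u : 'I_r.+1,
       forall j : 'I_(size Hs), forall v : 'I_r.+1,
         (F i u == F j v) == pident i u j v],
      [forall i : 'I_(size Hs), (val i == 0)%N ==>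
         (F i (pg_w1 (nth (pg_default r) Hs i)) == x)]
    & [forall i : 'I_(size Hs), (val i == (size Hs).-1)%N ==>
         (F i (pg_w2 (nth (pg_default r) Hs i)) == y)]].

Definition n_path_emb r n (G : rel 'I_n) (Hs : seq (pgraph r)) (x y : 'I_n) : nat :=
  #|[pred F : {ffun 'I_(size Hs) -> {ffun 'I_r.+1 -> 'I_n}} | @path_emb r n G Hs x y F]|.

(* (H; beta)-reachability; t = size Hs >= 1 and the H-path has t*r+1 vertices. *)
Definition reachable (R : realType) r n (G : rel 'I_n) (Hs : seq (pgraph r))
    (beta : R) (x y : 'I_n) : Prop :=
  (0 < size Hs)%N /\
  beta * (n%:R) ^+ (size Hs * r - 1) <= (n_path_emb G Hs x y)%:R.

Definition reachableS (R : realType) r n (G : rel 'I_n)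
    (HH : seq (seq (pgraph r))) (beta : R) (x y : 'I_n) : Prop :=
  exists2 Hs, Hs \in HH & reachable G Hs beta x y.

Definition plusH r (HH HH' : seq (seq (pgraph r))) : seq (seq (pgraph r)) :=
  HH ++ HH' ++ [seq Hs ++ Hs' | Hs <- HH, Hs' <- HH'].

From HB Require Import structures.
From mathcomp Require Import all_boot all_order all_algebra.
From mathcomp Require Import reals.
From mathcomp Require Import zify lra.
Set Implicit Arguments. Unset Strict Implicit. Unset Printing Implicit Defensive.
Import Order.TTheory GRing.Theory Num.Theory.

(* Count the triples (z, F1, F2) with z a common midpoint, F1 an embedding of
   an H_x-path from x to z and F2 one of an H_y-path from z to y.  Choosing the
   pair (H_x, H_y) shared by the most midpoints (pigeonhole), reachability gives
   at least (eps n / (t_x t_y)) beta_x beta_y n^(tr-2) triples, where tr - 1 is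
   the exponent for the concatenated path.  When F1 and F2 meet only in z they
   glue to an embedding of the concatenated path from x to y, from which the
   triple can be recovered.  Otherwise some vertex of F1 and some vertex of F2
   other than z coincide.  A triple is determined by its values on the tr - 2
   inner vertices of the two paths together with z, and such a coincidence
   forces one of these tr - 1 values, so for each of the boundedly many pairs
   of positions at most n^(tr-2) triples collide there.  For large n the glued
   embeddings therefore number at least beta n^(tr-1). *)

Lemma card_le_determined (T A : finType) n (P : {set T}) (e : T -> A -> 'I_n)
    (D : {set A}) :
  {in P &, forall s t, {in D, e s =1 e t} -> s = t} -> #|P| <= n ^ #|D|.
Proof.
move=> detP.
pose f s : {ffun {a | a \in D} -> 'I_n} := [ffun a => e s (val a)].
have f_inj : {in P &, injective f}.
  move=> s t sP tP /ffunP eq_st; apply: detP => // a aD.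
  by have := eq_st (exist _ a aD); rewrite !ffunE.
rewrite -(card_in_imset f_inj); apply: leq_trans (max_card _) _.
by rewrite card_ffun card_ord card_sig.
Qed.

Lemma card_bigcup_le (T I : finType) (B : I -> {set T}) :
  #|\bigcup_i B i| <= \sum_i #|B i|.
Proof.
elim/big_rec2: _ => [|i U s _ IH]; first by rewrite cards0.
by apply: leq_trans (leq_card_setU _ _) _; rewrite leq_add2l.
Qed.

Lemma pigeonhole_bigcup (T I : finType) (A : {set T}) (B : I -> {set T}) :
  A \subset \bigcup_i B i -> A != set0 -> exists i, #|A| <= #|I| * #|B i|.
Proof.
move=> sAB /set0Pn[a /(subsetP sAB)/bigcupP[i0 _ _]].
have I_gt0 : 0 < #|I| by apply/card_gt0P; exists i0.
have [i maxBi] := @bigop.eq_bigmax I (fun i => #|B i|) I_gt0.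
exists i; rewrite -maxBi -sum_nat_const.
apply: leq_trans (subset_leq_card sAB) (leq_trans (card_bigcup_le B) _).
by apply: leq_sum => j _; apply: leq_bigmax.
Qed.

Notation copy Hs i := (nth (pg_default _) Hs i).
Notation coord r Hs := ('I_(size Hs) * 'I_r.+1)%type.
Notation path_map r n Hs := {ffun 'I_(size Hs) -> {ffun 'I_r.+1 -> 'I_n}}.

Definition emb_at r n k (F : {ffun 'I_k -> {ffun 'I_r.+1 -> 'I_n}})
    (p : 'I_k * 'I_r.+1) : 'I_n :=
  F p.1 p.2.

Lemma path_embP r n (G : rel 'I_n) (Hs : seq (pgraph r)) (x y : 'I_n)
    (F : path_map r n Hs) :
  reflect
    [/\ forall (i : 'I_(size Hs)) u v, pg_adj (copy Hs i) u v -> G (F i u) (F i v),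
        forall (i : 'I_(size Hs)) u j v, (F i u == F j v) = pident i u j v,
        forall i : 'I_(size Hs), (i : nat) = 0 -> F i (pg_w1 (copy Hs i)) = x &
        forall i : 'I_(size Hs), (i : nat) = (size Hs).-1 -> F i (pg_w2 (copy Hs i)) = y]
    (path_emb G x y F).
Proof.
apply: (iffP and4P) => [[edgeF identF firstF lastF] | [edgeF identF firstF lastF]];
  split.
- by move=> i u v; move/forallP/(_ i)/forallP/(_ u)/forallP/(_ v)/implyP: edgeF.
- move=> i u j v.
  by move/forallP/(_ i)/forallP/(_ u)/forallP/(_ j)/forallP/(_ v)/eqP: identF.
- by move=> i /eqP i0; apply/eqP; move/forallP/(_ i)/implyP: firstF; apply.
- by move=> i /eqP ilast; apply/eqP; move/forallP/(_ i)/implyP: lastF; apply.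
- by apply/forallP=> i; apply/forallP=> u; apply/forallP=> v; apply/implyP/edgeF.
- apply/forallP=> i; apply/forallP=> u; apply/forallP=> j; apply/forallP=> v.
  by rewrite identF.
- by apply/forallP=> i; apply/implyP=> /eqP/firstF->.
- by apply/forallP=> i; apply/implyP=> /eqP/lastF->.
Qed.

Lemma pg_ok_gt0 r (H : pgraph r) : pg_ok H -> 0 < r.
Proof.
by case: r H => // H /and3P[_ _]; rewrite (ord1 (pg_w1 H)) (ord1 (pg_w2 H)).
Qed.

Section OnePath.

Variables (r n : nat) (G : rel 'I_n) (Hs : seq (pgraph r)).
Hypothesis Hs_ok : all (@pg_ok r) Hs.

Lemma copy_w1_neq_w2 i : i < size Hs -> pg_w1 (copy Hs i) != pg_w2 (copy Hs i).
Proof. by move=> lt_i; have /and3P[] := allP Hs_ok _ (mem_nth (pg_default r) lt_i). Qed.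

Lemma emb_eq_first x y (F : path_map r n Hs) i u : path_emb G x y F ->
  (F i u == x) = ((i : nat) == 0) && (u == pg_w1 (copy Hs i)).
Proof.
case/path_embP=> _ identF firstF _.
have Hs_gt0 : 0 < size Hs by apply: leq_ltn_trans (ltn_ord i).
rewrite -(firstF (Ordinal Hs_gt0)) // identF /pident /=.
rewrite (negbTE (copy_w1_neq_w2 Hs_gt0)) !andbF !orbF -val_eqE /=.
by case: eqP => [->|].
Qed.

Lemma emb_eq_last x y (F : path_map r n Hs) i u : path_emb G x y F ->
  (F i u == y) = ((i : nat) == (size Hs).-1) && (u == pg_w2 (copy Hs i)).
Proof.
case/path_embP=> _ identF _ lastF.
have Hs_gt0 : 0 < size Hs by apply: leq_ltn_trans (ltn_ord i).
have lt_last : (size Hs).-1 < size Hs by rewrite ltn_predL.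
rewrite -(lastF (Ordinal lt_last)) // identF /pident /= [pg_w2 _ == _]eq_sym.
rewrite (negbTE (copy_w1_neq_w2 lt_last)) prednK // (ltn_eqF (ltn_ord i)).
by rewrite !andbF !orbF -val_eqE /=; case: eqP => [->|].
Qed.

Definition last_coord (Hs_gt0 : 0 < size Hs) : coord r Hs :=
  (Ordinal (etrans (ltn_predL _) Hs_gt0), pg_w2 (copy Hs (size Hs).-1)).

Lemma emb_at_last_coord Hs_gt0 x y (F : path_map r n Hs) :
  path_emb G x y F -> emb_at F (last_coord Hs_gt0) = y.
Proof. by case/path_embP=> _ _ _ lastF; apply: lastF. Qed.

(* One representative of each vertex of the H-path other than its endpoints:
   the identified pair (i, w2^i) ~ (i+1, w1^(i+1)) is represented by the first. *)
Definition inner_coords : {set coord r Hs} :=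
  [set p : coord r Hs | (p.2 != pg_w1 (copy Hs p.1)) &&
           ~~ (((p.1 : nat) == (size Hs).-1) && (p.2 == pg_w2 (copy Hs p.1)))].

Lemma card_inner_coords : 0 < size Hs -> #|inner_coords| <= size Hs * r - 1.
Proof.
move=> Hs_gt0.
pose first_coords := [set (i, pg_w1 (copy Hs i)) | i : 'I_(size Hs)].
have card_first : #|first_coords| = size Hs.
  by rewrite card_imset ?card_ord // => i j [].
have last_notin_first : last_coord Hs_gt0 \notin first_coords.
  apply/imsetP=> -[i _ [eq_i eq_u]].
  by have := copy_w1_neq_w2 (ltn_ord i); rewrite -eq_u -eq_i eqxx.
have sub_inner : inner_coords \subset ~: (last_coord Hs_gt0 |: first_coords).
  apply/subsetP=> p; rewrite !inE => /andP[not_first not_last].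
  apply/negP=> /orP[/eqP eq_p | /imsetP[i _ eq_p]].
    by move: not_last; rewrite eq_p /= !eqxx.
  by move: not_first; rewrite eq_p /= eqxx.
apply: leq_trans (subset_leq_card sub_inner) _.
rewrite cardsCs setCK cardsU1 last_notin_first card_first card_prod !card_ord.
by rewrite mulnS; lia.
Qed.

Lemma coord_cases (p : coord r Hs) :
  [\/ exists2 p', p' \in inner_coords &
        forall x y (F : path_map r n Hs), path_emb G x y F -> emb_at F p = emb_at F p',
      forall x y (F : path_map r n Hs), path_emb G x y F -> emb_at F p = x |
      forall x y (F : path_map r n Hs), path_emb G x y F -> emb_at F p = y].
Proof.
case: p => i u; rewrite /emb_at /=.
have [->|not_first] := eqVneq u (pg_w1 (copy Hs i)).
  case: (posnP i) => [i0|i_gt0].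
    by apply: Or32 => x y F /path_embP[_ _ firstF _]; apply: firstF.
  have lt_prev : i.-1 < size Hs by rewrite (leq_ltn_trans (leq_pred i)).
  pose prev := Ordinal lt_prev.
  apply: Or31; exists (prev, pg_w2 (copy Hs prev)).
    rewrite inE /= eq_sym copy_w1_neq_w2 //=.
    by apply/negP=> /andP[/eqP eq_prev _]; have := ltn_ord i; lia.
  move=> x y F /path_embP[_ identF _ _]; apply/eqP; rewrite identF /pident /=.
  by rewrite prednK // !eqxx !orbT.
case: (boolP (((i : nat) == (size Hs).-1) && (u == pg_w2 (copy Hs i)))).
  case/andP=> /eqP i_last /eqP ->.
  by apply: Or33 => x y F /path_embP[_ _ _ lastF]; apply: lastF.
by move=> not_last; apply: Or31; exists (i, u); rewrite // inE /= not_first.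
Qed.

Lemma emb_determined x y (F F' : path_map r n Hs) :
  path_emb G x y F -> path_emb G x y F' ->
  {in inner_coords, emb_at F =1 emb_at F'} -> F = F'.
Proof.
move=> embF embF' eqFF'; apply/ffunP=> i; apply/ffunP=> u.
case: (coord_cases (i, u)) => [[p' p'_inner eq_p] | eq_p | eq_p];
  rewrite -[F i u]/(emb_at F (i, u)) -[F' i u]/(emb_at F' (i, u));
  rewrite (eq_p _ _ _ embF) (eq_p _ _ _ embF') //.
exact: eqFF'.
Qed.

End OnePath.

(* [pident] on plain indices, so that it can be compared along [Hsx ++ Hsy]. *)
Definition pidentn r (Hs : seq (pgraph r)) (i : nat) (u : 'I_r.+1) (j : nat)
    (v : 'I_r.+1) : bool :=
  [|| (i == j) && (u == v),
      [&& j == i.+1, u == pg_w2 (copy Hs i) & v == pg_w1 (copy Hs j)]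
    | [&& i == j.+1, v == pg_w2 (copy Hs j) & u == pg_w1 (copy Hs i)]].

Lemma pidentE r (Hs : seq (pgraph r)) (i j : 'I_(size Hs)) u v :
  pident i u j v = pidentn Hs i u j v.
Proof. by []. Qed.

Lemma pidentnC r (Hs : seq (pgraph r)) i u j v :
  pidentn Hs i u j v = pidentn Hs j v i u.
Proof.
by rewrite /pidentn [i == j]eq_sym [u == v]eq_sym; case: (_ && _) => //=; rewrite orbC.
Qed.

Lemma pidentn_catl r (Hsx Hsy : seq (pgraph r)) i u j v :
  i < size Hsx -> j < size Hsx -> pidentn (Hsx ++ Hsy) i u j v = pidentn Hsx i u j v.
Proof. by move=> lt_i lt_j; rewrite /pidentn !nth_cat lt_i lt_j. Qed.

Lemma pidentn_catr r (Hsx Hsy : seq (pgraph r)) i u j v :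
  pidentn (Hsx ++ Hsy) (size Hsx + i) u (size Hsx + j) v = pidentn Hsy i u j v.
Proof.
rewrite /pidentn !nth_cat !ltnNge !leq_addr /= !addKn.
by rewrite eqn_add2l -!addnS !eqn_add2l.
Qed.

Lemma pidentn_cat_mid r (Hsx Hsy : seq (pgraph r)) i u j v : i < size Hsx ->
  pidentn (Hsx ++ Hsy) i u (size Hsx + j) v =
  [&& size Hsx + j == i.+1, u == pg_w2 (copy Hsx i) & v == pg_w1 (copy Hsy j)].
Proof.
move=> lt_i; rewrite /pidentn !nth_cat lt_i ltnNge leq_addr /= addKn.
have -> : (i == size Hsx + j) = false by apply/eqP; lia.
have -> : (i == (size Hsx + j).+1) = false by apply/eqP; lia.
by rewrite orbF.
Qed.

Section Concatenation.

Variables (r n : nat) (G : rel 'I_n) (Hsx Hsy : seq (pgraph r)).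
Hypotheses (Hsx_ok : all (@pg_ok r) Hsx) (Hsy_ok : all (@pg_ok r) Hsy).

Definition cat_emb (F1 : path_map r n Hsx) (F2 : path_map r n Hsy) :
    path_map r n (Hsx ++ Hsy) :=
  [ffun i => match split (cast_ord (size_cat Hsx Hsy) i) with
             | inl i1 => F1 i1 | inr i2 => F2 i2 end].

Definition meet_only_at z (F1 : path_map r n Hsx) (F2 : path_map r n Hsy) : bool :=
  [forall p, forall q, (emb_at F1 p == emb_at F2 q) ==> (emb_at F1 p == z)].

Lemma cat_emb_cases F1 F2 (i : 'I_(size (Hsx ++ Hsy))) :
  (exists2 i1 : 'I_(size Hsx), (i : nat) = i1 & cat_emb F1 F2 i = F1 i1) \/
  (exists2 i2 : 'I_(size Hsy), (i : nat) = size Hsx + i2 & cat_emb F1 F2 i = F2 i2).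
Proof.
by rewrite ffunE; case: splitP => [i1|i2] eq_i; [left; exists i1 | right; exists i2].
Qed.

Lemma cat_emb_l F1 F2 (i : 'I_(size (Hsx ++ Hsy))) (i1 : 'I_(size Hsx)) :
  (i : nat) = i1 -> cat_emb F1 F2 i = F1 i1.
Proof.
move=> eq_i; case: (cat_emb_cases F1 F2 i) => [[j eq_j ->] | [j eq_j _]].
  by congr (F1 _); apply: val_inj; rewrite /= -eq_j.
by have := ltn_ord i1; rewrite -eq_i eq_j ltnNge leq_addr.
Qed.

Lemma cat_emb_r F1 F2 (i : 'I_(size (Hsx ++ Hsy))) (i2 : 'I_(size Hsy)) :
  (i : nat) = size Hsx + i2 -> cat_emb F1 F2 i = F2 i2.
Proof.
move=> eq_i; case: (cat_emb_cases F1 F2 i) => [[j eq_j _] | [j eq_j ->]].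
  by have := ltn_ord j; rewrite -eq_j eq_i ltnNge leq_addr.
by congr (F2 _); apply: val_inj; apply/eqP; rewrite -(eqn_add2l (size Hsx)) -eq_i eq_j.
Qed.

Lemma cat_emb_inj F1 F2 F1' F2' : cat_emb F1 F2 = cat_emb F1' F2' -> F1 = F1' /\ F2 = F2'.
Proof.
move=> eq_cat; split; apply/ffunP.
  move=> i1; have lt_i1 : i1 < size (Hsx ++ Hsy) by rewrite size_cat ltn_addr.
  by rewrite -(@cat_emb_l F1 F2 (Ordinal lt_i1) i1) // eq_cat (@cat_emb_l _ _ _ i1).
move=> i2; have lt_i2 : size Hsx + i2 < size (Hsx ++ Hsy) by rewrite size_cat ltn_add2l.
by rewrite -(@cat_emb_r F1 F2 (Ordinal lt_i2) i2) // eq_cat (@cat_emb_r _ _ _ i2).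
Qed.

Variables (x y z : 'I_n) (F1 : path_map r n Hsx) (F2 : path_map r n Hsy).
Hypotheses (Hsx_gt0 : 0 < size Hsx) (Hsy_gt0 : 0 < size Hsy).
Hypotheses (emb1 : path_emb G x z F1) (emb2 : path_emb G z y F2).

Lemma meet_only_at_ident (i1 : 'I_(size Hsx)) (i2 : 'I_(size Hsy)) u v :
  meet_only_at z F1 F2 ->
  (F1 i1 u == F2 i2 v) = pidentn (Hsx ++ Hsy) i1 u (size Hsx + i2) v.
Proof.
move=> /forallP meet_z; rewrite pidentn_cat_mid //.
apply/idP/idP=> [/eqP eq_uv | /and3P[/eqP eq_i eq_u eq_v]].
  have /eqP eq1 : F1 i1 u == z.
    by move: (meet_z (i1, u)) => /forallP/(_ (i2, v))/implyP; apply; apply/eqP.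
  have eq2 : F2 i2 v == z by rewrite -eq_uv eq1.
  move: eq2; rewrite (emb_eq_first Hsy_ok _ _ emb2) => /andP[/eqP i2_0 ->].
  move/eqP: eq1; rewrite (emb_eq_last Hsx_ok _ _ emb1) => /andP[/eqP i1_last ->].
  by rewrite !andbT; have := ltn_ord i1; lia.
apply/eqP; transitivity z; apply/eqP.
  by rewrite (emb_eq_last Hsx_ok _ _ emb1) eq_u andbT; have := ltn_ord i1; lia.
by rewrite eq_sym (emb_eq_first Hsy_ok _ _ emb2) eq_v andbT; have := ltn_ord i1; lia.
Qed.

Lemma cat_emb_path : meet_only_at z F1 F2 -> path_emb G x y (cat_emb F1 F2).
Proof.
move=> meet_z; have [edge1 ident1 first1 last1] := path_embP _ _ _ _ emb1.
have [edge2 ident2 first2 last2] := path_embP _ _ _ _ emb2.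
apply/path_embP; split.
- move=> i u v; case: (cat_emb_cases F1 F2 i) => [[i1 -> ->] | [i2 -> ->]].
    by rewrite nth_cat ltn_ord; apply: edge1.
  by rewrite nth_cat ltnNge leq_addr /= addKn; apply: edge2.
- move=> i u j v; rewrite pidentE.
  case: (cat_emb_cases F1 F2 i) => [[i1 -> ->] | [i2 -> ->]];
    case: (cat_emb_cases F1 F2 j) => [[j1 -> ->] | [j2 -> ->]].
  + by rewrite pidentn_catl // ident1.
  + exact: meet_only_at_ident.
  + by rewrite pidentnC eq_sym meet_only_at_ident.
  + by rewrite pidentn_catr ident2.
- move=> i i0; case: (cat_emb_cases F1 F2 i) => [[i1 eq_i ->] | [i2 eq_i _]].
    by rewrite nth_cat eq_i ltn_ord first1 // -eq_i.
  by move: i0; rewrite eq_i; lia.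
- move=> i i_last; case: (cat_emb_cases F1 F2 i) => [[i1 eq_i _] | [i2 eq_i ->]].
    by exfalso; have := ltn_ord i1; move: i_last; rewrite eq_i size_cat; lia.
  rewrite nth_cat eq_i ltnNge leq_addr /= addKn last2 //.
  by move: i_last; rewrite eq_i (size_cat Hsx Hsy); lia.
Qed.

End Concatenation.

Section MidpointTriples.

Variables (r n : nat) (G : rel 'I_n) (Hsx Hsy : seq (pgraph r)) (x y : 'I_n).
Variable C : {set 'I_n}.
Hypotheses (Hsx_ok : all (@pg_ok r) Hsx) (Hsy_ok : all (@pg_ok r) Hsy).
Hypotheses (Hsx_gt0 : 0 < size Hsx) (Hsy_gt0 : 0 < size Hsy).

Local Notation triple := ('I_n * (path_map r n Hsx * path_map r n Hsy))%type.

Definition midpoint_triples : {set triple} :=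
  [set t | [&& t.1 \in C, path_emb G x t.1 t.2.1 & path_emb G t.1 y t.2.2]].

Lemma card_midpoint_triples :
  #|midpoint_triples| = \sum_(z in C) n_path_emb G Hsx x z * n_path_emb G Hsy z y.
Proof.
pose mem_mid z F := if (z, F) \in midpoint_triples then 1 else 0.
rewrite -sum1_card big_mkcond (eq_bigr (fun t => mem_mid t.1 t.2)); last by case.
rewrite -(pair_bigA _ mem_mid) [RHS]big_mkcond; apply: eq_bigr => z _.
case: (boolP (z \in C)) => zC; last first.
  by rewrite big1 // => -[F1 F2] _; rewrite /mem_mid inE /= (negbTE zC).
rewrite /n_path_emb -!sum1_card big_distrlr /= pair_big /= [RHS]big_mkcond /=.
by apply: eq_bigr => -[F1 F2] _; rewrite /mem_mid inE /= zC.
Qed.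

Lemma card_meeting_triples :
  #|midpoint_triples :&: [set t | meet_only_at t.1 t.2.1 t.2.2]|
    <= n_path_emb G (Hsx ++ Hsy) x y.
Proof.
pose glue (t : triple) := cat_emb t.2.1 t.2.2.
have glue_inj : {in midpoint_triples :&: [set t | meet_only_at t.1 t.2.1 t.2.2] &,
                 injective glue}.
  move=> [z [F1 F2]] [z' [F1' F2']]; rewrite !inE /=.
  move=> /andP[/and3P[_ e1 _] _] /andP[/and3P[_ e1' _] _] /cat_emb_inj[/= eq1 eq2].
  by rewrite -(emb_at_last_coord Hsx_gt0 e1) -(emb_at_last_coord Hsx_gt0 e1') eq1 eq2.
rewrite -(card_in_imset glue_inj) /n_path_emb; apply: subset_leq_card; apply/subsetP=> F.
case/imsetP=> -[z [F1 F2]]; rewrite !inE /= => /andP[/and3P[_ e1 e2] meet_z] ->.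
exact: (cat_emb_path Hsx_ok Hsy_ok Hsx_gt0 Hsy_gt0 e1 e2 meet_z).
Qed.

Definition collision_triples (p : coord r Hsx) (q : coord r Hsy) : {set triple} :=
  [set t in midpoint_triples | (emb_at t.2.1 p == emb_at t.2.2 q) && (emb_at t.2.1 p != t.1)].

Lemma collision_triplesP p q z F1 F2 :
  reflect [/\ z \in C, path_emb G x z F1, path_emb G z y F2,
              emb_at F1 p = emb_at F2 q & emb_at F1 p != z]
          ((z, (F1, F2)) \in collision_triples p q).
Proof.
rewrite !inE /=; apply: (iffP idP).
  by case/andP=> /and3P[zC e1 e2] /andP[/eqP eq_pq neq_z].
by case=> -> -> -> -> ->; rewrite eqxx.
Qed.

Lemma not_meeting_sub_collisions :
  midpoint_triples :\: [set t | meet_only_at t.1 t.2.1 t.2.2]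
    \subset \bigcup_(pq : coord r Hsx * coord r Hsy) collision_triples pq.1 pq.2.
Proof.
apply/subsetP=> t; rewrite !inE => /andP[/forallPn[p /forallPn[q]]].
rewrite negb_imply => /andP[eq_pq neq_z] t_mid.
by apply/bigcupP; exists (p, q) => //; rewrite !inE t_mid eq_pq neq_z.
Qed.

Definition triple_at (t : triple) (c : coord r Hsx + coord r Hsy) : 'I_n :=
  match c with inl p => emb_at t.2.1 p | inr q => emb_at t.2.2 q end.

(* The midpoint z is read at the last vertex of the first path. *)
Definition key_coords : {set coord r Hsx + coord r Hsy} :=
  inl @: inner_coords Hsx :|: [set inl (last_coord Hsx_gt0)] :|: inr @: inner_coords Hsy.

Lemma inl_in_key_coords p : p \in inner_coords Hsx -> inl p \in key_coords.
Proof. by move=> p_inner; rewrite !inE imset_f. Qed.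

Lemma inr_in_key_coords q : q \in inner_coords Hsy -> inr q \in key_coords.
Proof. by move=> q_inner; rewrite !inE imset_f ?orbT. Qed.

Lemma card_key_coords : #|key_coords| <= (size Hsx * r - 1).+1 + (size Hsy * r - 1).
Proof.
apply: leq_trans (leq_card_setU _ _) _.
apply: leq_add; last by rewrite card_imset ?card_inner_coords // => ? ? [].
apply: leq_trans (leq_card_setU _ _) _.
by rewrite cards1 addn1 ltnS card_imset ?card_inner_coords // => ? ? [].
Qed.

Lemma midpoint_triples_determined :
  {in midpoint_triples &, forall s t, {in key_coords, triple_at s =1 triple_at t} -> s = t}.
Proof.
move=> [z [F1 F2]] [z' [F1' F2']]; rewrite !inE /= => /and3P[_ e1 e2] /and3P[_ e1' e2'] agree.
have eq_z : z = z'.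
  rewrite -(emb_at_last_coord Hsx_gt0 e1) -(emb_at_last_coord Hsx_gt0 e1').
  by apply: (agree (inl _)); rewrite !inE eqxx orbT.
subst z'; congr (_, (_, _)).
  apply: (emb_determined Hsx_ok e1 e1') => p p_inner.
  by apply: (agree (inl p)); rewrite inl_in_key_coords.
apply: (emb_determined Hsy_ok e2 e2') => q q_inner.
by apply: (agree (inr q)); rewrite inr_in_key_coords.
Qed.

Lemma card_forced_key_coord (S : {set triple}) d :
  S \subset midpoint_triples -> d \in key_coords ->
  {in S &, forall s t, {in key_coords :\ d, triple_at s =1 triple_at t} ->
     triple_at s d = triple_at t d} ->
  #|S| <= n ^ (size Hsx * r - 1 + (size Hsy * r - 1)).
Proof.
move=> /subsetP S_mid d_key forced_d.
have n_gt0 : 0 < n by apply: leq_ltn_trans (ltn_ord x).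
apply: leq_trans (card_le_determined (e := triple_at) (D := key_coords :\ d) _) _.
  move=> s t sS tS agree; apply: midpoint_triples_determined => [||c c_key]; rewrite ?S_mid //.
  have [-> | c_neq_d] := eqVneq c d; first exact: forced_d.
  by rewrite agree // in_setD1 c_neq_d.
rewrite leq_pexp2l //.
by have := card_key_coords; rewrite (cardsD1 d) d_key add1n addSn ltnS.
Qed.

Lemma card_collision_triples p q : x != y ->
  #|collision_triples p q| <= n ^ (size Hsx * r - 1 + (size Hsy * r - 1)).
Proof.
move=> x_neq_y; set S := collision_triples p q; set E := _ + _.
have no_collision : {in S, forall t, False} -> #|S| <= n ^ E.
  move=> S_empty; suff -> : S = set0 by rewrite cards0.
  by apply/setP=> t; rewrite in_set0; apply/negbTE/negP=> /S_empty.
have S_mid : S \subset midpoint_triples by apply/subsetP=> t /setIdP[].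
have q_first_empty : (forall x' y' F, path_emb G x' y' F -> emb_at F q = x') -> #|S| <= n ^ E.
  move=> eq_q; apply: no_collision => -[z [F1 F2]] /collision_triplesP[_ _ e2 ->].
  by rewrite (eq_q _ _ _ e2) eqxx.
have [[p' p'_inner eq_p] | eq_p | eq_p] := coord_cases G Hsx_ok p.
- have [[q' q'_inner eq_q] | eq_q | eq_q] := coord_cases G Hsy_ok q.
  + apply: (card_forced_key_coord S_mid (inr_in_key_coords q'_inner)).
    move=> [z [F1 F2]] [z' [F1' F2']] /collision_triplesP[_ e1 e2 eq12 _].
    move=> /collision_triplesP[_ e1' e2' eq12' _] agree /=.
    rewrite -(eq_q _ _ _ e2) -(eq_q _ _ _ e2') -eq12 -eq12' (eq_p _ _ _ e1) (eq_p _ _ _ e1').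
    by apply: (agree (inl p')); rewrite in_setD1 inl_in_key_coords.
  + exact: q_first_empty.
  + apply: (card_forced_key_coord S_mid (inl_in_key_coords p'_inner)).
    move=> [z [F1 F2]] [z' [F1' F2']] /collision_triplesP[_ e1 e2 eq12 _].
    move=> /collision_triplesP[_ e1' e2' eq12' _] _ /=.
    by rewrite -(eq_p _ _ _ e1) -(eq_p _ _ _ e1') eq12 eq12' (eq_q _ _ _ e2) (eq_q _ _ _ e2').
- have [[q' q'_inner eq_q] | eq_q | eq_q] := coord_cases G Hsy_ok q.
  + apply: (card_forced_key_coord S_mid (inr_in_key_coords q'_inner)).
    move=> [z [F1 F2]] [z' [F1' F2']] /collision_triplesP[_ e1 e2 eq12 _].
    move=> /collision_triplesP[_ e1' e2' eq12' _] _ /=.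
    rewrite -(eq_q _ _ _ e2) -(eq_q _ _ _ e2') -eq12 -eq12'.
    by rewrite (eq_p _ _ _ e1) (eq_p _ _ _ e1').
  + exact: q_first_empty.
  + apply: no_collision => -[z [F1 F2]] /collision_triplesP[_ e1 e2 eq12 _].
    by move: x_neq_y; rewrite -(eq_p _ _ _ e1) eq12 (eq_q _ _ _ e2) eqxx.
- apply: no_collision => -[z [F1 F2]] /collision_triplesP[_ e1 _ _].
  by rewrite (eq_p _ _ _ e1) eqxx.
Qed.

Lemma sum_midpoint_embs_le : x != y ->
  \sum_(z in C) n_path_emb G Hsx x z * n_path_emb G Hsy z y <=
    n_path_emb G (Hsx ++ Hsy) x y +
    size Hsx * r.+1 * (size Hsy * r.+1) * n ^ (size Hsx * r - 1 + (size Hsy * r - 1)).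
Proof.
move=> x_neq_y; rewrite -card_midpoint_triples.
rewrite -(cardsID [set t | meet_only_at t.1 t.2.1 t.2.2] midpoint_triples).
apply: leq_add; first exact: card_meeting_triples.
apply: leq_trans (subset_leq_card not_meeting_sub_collisions) _.
apply: leq_trans (card_bigcup_le _) _.
set E := _ + _.
apply: (@leq_trans (\sum_(pq : coord r Hsx * coord r Hsy) n ^ E)).
  by apply: leq_sum => pq _; apply: card_collision_triples.
by rewrite sum_nat_const (@card_prod (coord r Hsx) (coord r Hsy)) !card_prod !card_ord.
Qed.

End MidpointTriples.

Local Open Scope ring_scope.

Lemma concat_beta_le (R : realFieldType) (eps betax betay T c K KK m : R) :
  0 < eps -> 0 < betax -> 0 < betay -> 0 < T -> 0 <= KK <= K ->
  eps * m <= T * c -> 2 * K * T / (eps * betax * betay) < m ->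
  eps * betax * betay / (2 * T) <= (c * betax * betay - KK) / m.
Proof.
move=> eps_gt0 bx_gt0 by_gt0 T_gt0 /andP[KK_ge0 KK_le_K] mass large.
have q_gt0 : 0 < eps * betax * betay by rewrite !mulr_gt0.
have K_ge0 : 0 <= K := le_trans KK_ge0 KK_le_K.
have m_gt0 : 0 < m.
  by apply: le_lt_trans large; apply: divr_ge0; rewrite ?mulr_ge0 // ltW.
rewrite ler_pdivlMr // mulrAC ler_pdivrMr ?mulr_gt0 //.
move: large; rewrite ltr_pdivrMr // => large.
have mass' : eps * m * (betax * betay) <= T * c * (betax * betay).
  by rewrite ler_wpM2r // mulr_ge0 // ltW.
have KK_T : KK * T <= K * T by rewrite ler_wpM2r // ltW.
lra.
Qed.

Section Reachability.

Variables (R : realType) (r n : nat) (G : rel 'I_n).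

Lemma reachable_le (Hs : seq (pgraph r)) (beta beta' : R) x y :
  beta <= beta' -> reachable G Hs beta' x y -> reachable G Hs beta x y.
Proof.
move=> le_beta [Hs_gt0 many]; split=> //; apply: le_trans many.
by rewrite ler_wpM2r // exprn_ge0.
Qed.

Lemma reachable_common_pair (Hx Hy : seq (seq (pgraph r))) (betax betay : R) x y
    (U : {set 'I_n}) :
  U != set0 ->
  (forall z, z \in U -> reachableS G Hx betax x z /\ reachableS G Hy betay z y) ->
  exists Hsx, exists Hsy, exists C : {set 'I_n},
    [/\ Hsx \in Hx, Hsy \in Hy, (#|U| <= size Hx * size Hy * #|C|)%N &
        forall z, z \in C -> reachable G Hsx betax x z /\ reachable G Hsy betay z y].
Proof.
move=> U0 reachU.
pose reachb (Hs : seq (pgraph r)) (b : R) a c :=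
  (0 < size Hs)%N && (b * n%:R ^+ (size Hs * r - 1) <= (n_path_emb G Hs a c)%:R).
pose B (ij : 'I_(size Hx) * 'I_(size Hy)) :=
  [set z | reachb (nth [::] Hx ij.1) betax x z && reachb (nth [::] Hy ij.2) betay z y].
have cover : U \subset \bigcup_ij B ij.
  apply/subsetP=> z /reachU[[Hsx inx [Hsx_gt0 many_x]] [Hsy iny [Hsy_gt0 many_y]]].
  apply/bigcupP; exists (Ordinal (etrans (index_mem _ _) inx),
                         Ordinal (etrans (index_mem _ _) iny)) => //.
  by rewrite inE /= !nth_index // /reachb Hsx_gt0 Hsy_gt0 many_x many_y.
have [[i j] many_B] := pigeonhole_bigcup cover U0.
exists (nth [::] Hx i), (nth [::] Hy j), (B (i, j)); split; try exact: mem_nth.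
  by rewrite card_prod !card_ord in many_B.
by move=> z; rewrite inE => /andP[/andP[? ?] /andP[? ?]].
Qed.

Lemma reachable_cat (Hsx Hsy : seq (pgraph r)) (betax betay : R) x y (C : {set 'I_n}) :
  all (@pg_ok r) Hsx -> all (@pg_ok r) Hsy -> x != y -> C != set0 ->
  0 <= betax -> 0 <= betay ->
  (forall z, z \in C -> reachable G Hsx betax x z /\ reachable G Hsy betay z y) ->
  reachable G (Hsx ++ Hsy)
    ((#|C|%:R * betax * betay - (size Hsx * r.+1 * (size Hsy * r.+1))%:R) / n%:R) x y.
Proof.
move=> Hsx_ok Hsy_ok x_neq_y /set0Pn[z0 z0C] bx_ge0 by_ge0 reachC.
have [[Hsx_gt0 _] [Hsy_gt0 _]] := reachC z0 z0C.
have r_gt0 : (0 < r)%N := pg_ok_gt0 (allP Hsx_ok _ (mem_nth (pg_default r) Hsx_gt0)).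
have n_gt0 : (0 < n)%N by apply: leq_ltn_trans (ltn_ord x).
have rx_gt0 : (0 < size Hsx * r)%N by rewrite muln_gt0 Hsx_gt0.
have ry_gt0 : (0 < size Hsy * r)%N by rewrite muln_gt0 Hsy_gt0.
have sizeE : (size (Hsx ++ Hsy) * r - 1 = (size Hsx * r - 1 + (size Hsy * r - 1)).+1)%N.
  by rewrite size_cat mulnDl; lia.
split; first by rewrite size_cat addn_gt0 Hsx_gt0.
rewrite sizeE exprS mulrA divfK ?pnatr_eq0 -?lt0n // mulrBl lerBlDr.
have lower : #|C|%:R * betax * betay * n%:R ^+ (size Hsx * r - 1 + (size Hsy * r - 1)) <=
    (\sum_(z in C) n_path_emb G Hsx x z * n_path_emb G Hsy z y)%:R :> R.
  rewrite exprD mulrACA -(mulrA #|C|%:R) -mulrA mulr_natl -sumr_const natr_sum.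
  apply: ler_sum => z /reachC[[_ many_x] [_ many_y]].
  by rewrite natrM ler_pM // mulr_ge0 // exprn_ge0.
apply: le_trans lower _.
by rewrite -natrX -natrM -natrD ler_nat sum_midpoint_embs_le.
Qed.

End Reachability.

Unset Implicit Arguments.

Theorem lemma6p10 (R : realType) (r : nat) (Hx Hy : seq (seq (pgraph r)))
    (betax betay eps : R) :
  uniq Hx -> uniq Hy ->
  all (all (@pg_ok r)) Hx -> all (all (@pg_ok r)) Hy ->
  0 < betax -> 0 < betay -> 0 < eps ->
  exists n0 : nat, forall (n : nat) (G : rel 'I_n),
    (n0 <= n)%N -> symmetric G -> irreflexive G ->
    forall (x y : 'I_n) (U : {set 'I_n}),
      x != y ->
      eps * n%:R <= #|U|%:R ->
      (forall z, z \in U ->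
         reachableS G Hx betax x z /\ reachableS G Hy betay z y) ->
      reachableS G (plusH Hx Hy)
        (eps * betax * betay / (2 * (size Hx)%:R * (size Hy)%:R)) x y.
Proof.
move=> _ _ Hx_ok Hy_ok betax_gt0 betay_gt0 eps_gt0.
pose M := (\max_(Hs <- Hx ++ Hy) size Hs)%N.
pose K := (M * r.+1 * (M * r.+1))%N.
pose T := (size Hx * size Hy)%N.
exists (Num.bound (2 * K%:R * T%:R / (eps * betax * betay))).
move=> n G n_large _ _ x y U x_neq_y U_large reachU.
have U0 : U != set0.
  apply: contraTneq U_large => ->; rewrite cards0 -ltNge mulr_gt0 // ltr0n.
  exact: leq_ltn_trans (ltn_ord x).
have [Hsx [Hsy [C [inx iny UC reachC]]]] := reachable_common_pair U0 reachU.
have C0 : C != set0.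
  apply: contra_neq U0 => C0; apply/eqP.
  by rewrite -cards_eq0 -leqn0 -(muln0 T) -(cards0 'I_n) -C0.
exists (Hsx ++ Hsy); first by rewrite !mem_cat allpairs_f ?orbT.
apply: reachable_le (reachable_cat (allP Hx_ok _ inx) (allP Hy_ok _ iny) x_neq_y C0
                      (ltW betax_gt0) (ltW betay_gt0) reachC).
have le_M Hs : Hs \in Hx ++ Hy -> (size Hs <= M)%N by move=> HsP; apply: leq_bigmax_seq.
rewrite -(mulrA 2) -natrM; apply: (concat_beta_le (K := K%:R)) => //.
- by rewrite ltr0n muln_gt0; case: (Hx) inx; case: (Hy) iny.
- by rewrite ler0n ler_nat leq_mul ?leq_mul ?le_M // mem_cat ?inx ?iny ?orbT.
- by apply: le_trans U_large _; rewrite -natrM ler_nat.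
- by apply: lt_le_trans (archi_boundP _) _; rewrite ?ler_nat // divr_ge0 ?mulr_ge0 // ltW.
Qed.
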